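(* In the setting of the construction below, the set $\mathbb U$ is dense in $\mathbb U\cup\mathbb P$ (every tree in $\mathbb U\cup\mathbb P$ contains a tree in $\mathbb U$), and the set $\mathbb U\times_{E_0}\mathbb U$ is dense in $(\mathbb P\cup\mathbb U)\times_{E_0}(\mathbb P\cup\mathbb U)$.
   Context: Notation. $2^{<\omega}$ is the set of finite binary strings, $\Lambda$ the empty string, $\mathrm{lh}(s)$ the length of $s$, $2^n$ the set of strings of length $n$, $s\subseteq t$ means $t$ extends $s$, $s^\frown t$ concatenation. For strings $s,t$ with $\mathrm{lh}(s)\le\mathrm{lh}(t)$, $s\cdot t$ is the string of length $\mathrm{lh}(t)$ with $(s\cdot t)(k)=t(k)+s(k)\bmod 2$ for $k<\mathrm{lh}(s)$ and $(s\cdot t)(k)=t(k)$ otherwise; if $\mathrm{lh}(s)>\mathrm{lh}(t)$ then $s\cdot t=(s\restriction\mathrm{lh}(t))\cdot t$. For $T\subseteq 2^{<\omega}$, $s\cdot T=\{s\cdot t:t\in T\}$. For a tree $T$ and $s\in T$, $T\upharpoonright s=\{t\in T:s\subseteq t\lor t\subseteq s\}$. A perfect tree is a nonempty tree $T\subseteq 2^{<\omega}$ with no endpoints and no isolated branches; its stem $\mathrm{stem}(T)$ is the largest $s\in T$ with $T=T\upharpoonright s$. A perfect tree $T$ is large, written $T\in\mathbf{LT}$, if there are nonempty strings $q^i_n$ ($n<\omega$, $i=0,1$) with $\mathrm{lh}(q^0_n)=\mathrm{lh}(q^1_n)\ge1$ and $q^i_n(0)=i$, such that $T$ consists exactly of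 all initial segments of strings $r^\frown q^{i(0)}_0{}^\frown\cdots{}^\frown q^{i(n)}_n$, where $r=\mathrm{stem}(T)$, $n<\omega$, $i(0),\dots,i(n)\in\{0,1\}$. Its splitting levels are $\mathrm{spl}_0(T)=\mathrm{lh}(r)$, $\mathrm{spl}_{n+1}(T)=\mathrm{spl}_n(T)+\mathrm{lh}(q^0_n)$. For $T\in\mathbf{LT}$ and $i\in\{0,1\}$, $T(\to i)=T\upharpoonright(\mathrm{stem}(T)^\frown i)$; for $s\in 2^n$ with $n\ge1$, $T(\to s)=(\cdots((T(\to s(0)))(\to s(1)))\cdots)(\to s(n-1))$, and $T(\to\Lambda)=T$. For $S,T\in\mathbf{LT}$, $S\subseteq_n T$ means $S\subseteq T$ and $\mathrm{spl}_k(S)=\mathrm{spl}_k(T)$ for all $k<n$. A large-tree forcing notion (LTF) is a set $\mathbb P\subseteq\mathbf{LT}$ such that $T\upharpoonright u\in\mathbb P$ whenever $u\in T\in\mathbb P$, and $s\cdot T\in\mathbb P$ whenever $T\in\mathbb P$ and $s\in 2^{<\omega}$; ordered by inclusion. $\mathbf{LC}_n(\mathbb P)$ is the set of $T\in\mathbf{LT}$ with $T(\to s)\in\mathbb P$ for all $s\in 2^n$. For a set $\mathbb Q$ of trees, $\mathbb Q\times_{E_0}\mathbb Q$ is the set of pairs $\langle T,T'\rangle$ of trees in $\mathbb Q$ with $T'=s\cdot T$ for some $s\in2^{<\omega}$, ordered componentwise by inclusion. Multitrees. A multitree is a sequence $\varphi=\langle\langle\tau^\varphi_k,p^\varphi_k\rangle:k<\omega\rangle$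 with $p^\varphi_k\in\omega\cup\{-1\}$, such that the support $|\varphi|=\{k:p^\varphi_k\ne-1\}$ is finite; for $k\in|\varphi|$, $\tau^\varphi_k=\langle T^\varphi_k(0),\dots,T^\varphi_k(p^\varphi_k)\rangle$ with each $T^\varphi_k(n)\in\mathbf{LT}$ and $T^\varphi_k(n)\subseteq_n T^\varphi_k(n-1)$ for $1\le n\le p^\varphi_k$; for $k\notin|\varphi|$, $\tau^\varphi_k$ is empty. $\psi\preccurlyeq\varphi$ means $|\psi|\subseteq|\varphi|$ and for $k\in|\psi|$: $p^\varphi_k\ge p^\psi_k$ and $T^\varphi_k(n)=T^\psi_k(n)$ for all $n\le p^\psi_k$. $\mathbf{MT}(\mathbb P)$ is the set of multitrees $\varphi$ with $T^\varphi_k(n)\in\mathbf{LC}_n(\mathbb P)$ for all $k\in|\varphi|$, $n\le p^\varphi_k$. Construction. $\mathrm{ZFC}'$ is ZFC without the power set axiom plus the axiom that $\mathcal P(\omega)$ exists. Let $\mathfrak M$ be a countable transitive model of $\mathrm{ZFC}'$ and $\mathbb P\in\mathfrak M$ an LTF. Let $\Phi=\langle\varphi(j):j<\omega\rangle$ be a $\preccurlyeq$-increasing sequence in $\mathbf{MT}(\mathbb P)$ meeting every set $D\in\mathfrak M$, $D\subseteq\mathbf{MT}(\mathbb P)$, which is dense (every $\psi\in\mathbf{MT}(\mathbb P)$ has some $\varphi\in D$ with $\psi\preccurlyeq\varphi$). Then for each $k$ there are trees $T^\Phi_k(n)\in\mathbf{LC}_n(\mathbb P)$, $n<\omega$, with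 $T^\Phi_k(n+1)\subseteq_{n+1}T^\Phi_k(n)$, such that $T^{\varphi(j)}_k(n)=T^\Phi_k(n)$ whenever $k\in|\varphi(j)|$ and $n\le p^{\varphi(j)}_k$. Put $U^\Phi_k=\bigcap_n T^\Phi_k(n)\in\mathbf{LT}$, $U^\Phi_k(s)=U^\Phi_k(\to s)$ for $s\in 2^{<\omega}$, and $\mathbb U=\{\sigma\cdot U^\Phi_k(s):k<\omega,\ s,\sigma\in 2^{<\omega}\}$. *)

From mathcomp Require Import all_boot.
Set Implicit Arguments. Unset Strict Implicit. Unset Printing Implicit Defensive.

Definition str := seq bool.
Definition tree := str -> Prop.
Definition treeset := tree -> Prop.

Definition ext (s t : str) : Prop := prefix s t.

Definition subtree (S T : tree) : Prop := forall t, S t -> T t.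

Definition restr (T : tree) (u : str) : tree :=
  fun t => T t /\ (ext u t \/ ext t u).

Definition dotop (s t : str) : str :=
  mkseq (fun k => if k < size s then nth false t k (+) nth false s k
                  else nth false t k) (size t).

Definition dotT (s : str) (T : tree) : tree :=
  fun t' => exists t, T t /\ t' = dotop s t.

Definition is_tree (T : tree) : Prop :=
  (exists t, T t) /\ (forall s t, T t -> ext s t -> T s).

Definition perfect (T : tree) : Prop :=
  is_tree T /\
  forall t, T t -> exists u, ext t u /\ T (rcons u false) /\ T (rcons u true).

Definition is_stem (T : tree) (r : str) : Prop :=
  T r /\ (forall t, T t <-> restr T r t) /\
  (forall s, T s -> (forall t, T t <-> restr T s t) -> ext s r).

Definition branch (r : str) (q : nat -> bool -> str) (f : nat -> bool) (n : nat) : str :=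
  r ++ flatten [seq q m (f m) | m <- iota 0 n.+1].

(* T is large, witnessed by stem r and blocks q n i = q^i_n *)
Definition LTrep (T : tree) (r : str) (q : nat -> bool -> str) : Prop :=
  (forall n, size (q n false) = size (q n true) /\ 1 <= size (q n false) /\
             forall i : bool, nth (~~ i) (q n i) 0 = i) /\
  is_stem T r /\
  (forall t, T t <-> exists n (f : nat -> bool), ext t (branch r q f n)).

Definition LT (T : tree) : Prop := perfect T /\ exists r q, LTrep T r q.

Definition splf (r : str) (q : nat -> bool -> str) (k : nat) : nat :=
  size r + sumn [seq size (q m false) | m <- iota 0 k].

Definition spl_is (T : tree) (k m : nat) : Prop :=
  exists r q, LTrep T r q /\ splf r q k = m.

Definition subn_LT (n : nat) (S T : tree) : Prop :=
  subtree S T /\ forall k, k < n -> exists m, spl_is S k m /\ spl_is T k m.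

Definition goto1 (T : tree) (i : bool) : tree :=
  fun t => exists r, is_stem T r /\ restr T (rcons r i) t.

Fixpoint goto (T : tree) (s : str) : tree :=
  match s with
  | [::] => T
  | i :: s' => goto (goto1 T i) s'
  end.

Definition LTF (P : treeset) : Prop :=
  (forall T, P T -> LT T) /\
  (forall T u, P T -> T u -> P (restr T u)) /\
  (forall T s, P T -> P (dotT s T)).

Definition LC (P : treeset) (n : nat) (T : tree) : Prop :=
  LT T /\ forall s : str, size s = n -> P (goto T s).

(* Multitrees.  mp k = None encodes p_k = -1; for mp k = Some p,
   mT k n (n <= p) is T_k(n).  Values mT k n for n > p (or k outside the
   support) are irrelevant junk and never inspected. *)
Record multitree := MultiTree { mp : nat -> option nat; mT : nat -> nat -> tree }.

Definition in_supp (phi : multitree) (k : nat) : Prop := exists p, mp phi k = Some p.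

Definition is_multitree (phi : multitree) : Prop :=
  (exists N, forall k, N <= k -> mp phi k = None) /\
  (forall k p, mp phi k = Some p ->
     (forall n, n <= p -> LT (mT phi k n)) /\
     (forall n, 1 <= n -> n <= p -> subn_LT n (mT phi k n) (mT phi k n.-1))).

Definition mt_le (psi phi : multitree) : Prop :=
  forall k a, mp psi k = Some a ->
    exists b, mp phi k = Some b /\ a <= b /\
      forall n, n <= a -> mT phi k n = mT psi k n.

Definition MT (P : treeset) (phi : multitree) : Prop :=
  is_multitree phi /\
  forall k p, mp phi k = Some p -> forall n, n <= p -> LC P n (mT phi k n).

Definition dense_MT (P : treeset) (D : multitree -> Prop) : Prop :=
  (forall phi, D phi -> MT P phi) /\
  forall psi, MT P psi -> exists phi, D phi /\ mt_le psi phi.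

(* Abstraction of "D ∈ 𝔐" for a countable transitive model 𝔐 of ZFC' with
   P ∈ 𝔐.  We only assume that 𝔐 contains the
   following subsets of MT(P), all of which are definable in 𝔐 from the
   parameters P, T ∈ P, k, n ∈ ω, hence belong to any such model. *)
Definition model_ok (P : treeset) (inM : (multitree -> Prop) -> Prop) : Prop :=
  (forall k n, inM (fun phi => MT P phi /\
                      exists p, mp phi k = Some p /\ n <= p)) /\
  (forall T, P T -> inM (fun phi => MT P phi /\
                      exists k p, mp phi k = Some p /\ mT phi k 0 = T)).

(* U^Φ_k = ⋂_n T^Φ_k(n), where T^Φ_k(n) = T^{φ(j)}_k(n) for any j with
   k ∈ |φ(j)| and n <= p^{φ(j)}_k *)
Definition UPhi (Phi : nat -> multitree) (k : nat) : tree :=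
  fun t => forall n, exists j p, mp (Phi j) k = Some p /\ n <= p /\ mT (Phi j) k n t.

Definition Uset (Phi : nat -> multitree) : treeset :=
  fun X => exists k (s sigma : str), X = dotT sigma (goto (UPhi Phi k) s).

Definition E0pair (Q : treeset) (X X' : tree) : Prop :=
  Q X /\ Q X' /\ exists s, X' = dotT s X.

(* A tree X of P can be grafted as the root T_N(0) of a fresh coordinate N onto
   any multitree; hence the multitrees having X as some T_k(0) form a dense set
   of the model, and the generic sequence Phi meets it.  Then U_k, the
   intersection of all T_k(n), lies inside T_k(0) = X.  Since U is closed under
   the shifts s . T, a pair (X, s . X) is refined by (Y, s . Y) for any Y in U
   below X. *)
From Stdlib Require Import FunctionalExtensionality PropExtensionality.
From mathcomp Require Import all_boot.

Set Implicit Arguments. Unset Strict Implicit. Unset Printing Implicit Defensive.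

Lemma nth_mkseq_dflt (f : nat -> bool) n k :
  nth false (mkseq f n) k = if k < n then f k else false.
Proof.
case: ltnP => [lt_k | le_n_k]; first exact: nth_mkseq.
by rewrite nth_default // size_mkseq.
Qed.

Lemma dotop_eq s t :
  dotop s t = mkseq (fun k => nth false t k (+) nth false s k) (size t).
Proof.
apply: eq_mkseq => k; case: ltnP => // le_s_k.
by rewrite (nth_default false le_s_k) addbF.
Qed.

Lemma size_dotop s t : size (dotop s t) = size t.
Proof. exact: size_mkseq. Qed.

Lemma dotop_nil t : dotop [::] t = t.
Proof.
rewrite dotop_eq -[RHS](mkseq_nth false); apply: eq_mkseq => k.
by rewrite nth_nil addbF.
Qed.

Definition xorstr (s u : str) : str :=
  mkseq (fun k => nth false s k (+) nth false u k) (maxn (size s) (size u)).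

Lemma nth_xorstr s u k :
  nth false (xorstr s u) k = nth false s k (+) nth false u k.
Proof.
rewrite nth_mkseq_dflt; case: ltnP => // le_k.
rewrite !nth_default //; apply: leq_trans le_k; [exact: leq_maxr | exact: leq_maxl].
Qed.

Lemma dotopA s u t : dotop s (dotop u t) = dotop (xorstr s u) t.
Proof.
apply: (@eq_from_nth _ false) => [|k]; rewrite !size_dotop // => lt_k.
rewrite !dotop_eq size_mkseq !(nth_mkseq _ _ lt_k) nth_xorstr.
by case: (nth false t k); case: (nth false s k); case: (nth false u k).
Qed.

Lemma dotTA s u T : dotT s (dotT u T) = dotT (xorstr s u) T.
Proof.
apply: functional_extensionality => x; apply: propositional_extensionality.
split => [[_ [[t [Tt ->]] ->]] | [t [Tt ->]]].
  by exists t; rewrite dotopA.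
by exists (dotop u t); split; [exists t | rewrite dotopA].
Qed.

Lemma dotT_nil T : dotT [::] T = T.
Proof.
apply: functional_extensionality => x; apply: propositional_extensionality.
by split => [[t [Tt ->]] | Tx]; [rewrite dotop_nil | exists x; rewrite dotop_nil].
Qed.

Lemma dotT_subtree s X X' : subtree X X' -> subtree (dotT s X) (dotT s X').
Proof. by move=> sub_XX' _ [t [Xt ->]]; exists t; split => //; apply: sub_XX'. Qed.

Lemma Uset_UPhi Phi k : Uset Phi (UPhi Phi k).
Proof. by exists k, [::], [::]; rewrite dotT_nil. Qed.

Lemma Uset_dotT Phi s X : Uset Phi X -> Uset Phi (dotT s X).
Proof. by move=> [k [s0 [sigma ->]]]; exists k, s0, (xorstr s sigma); rewrite dotTA. Qed.

Lemma UPhi_sub_root (Phi : nat -> multitree) j k p :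
  (forall i j, i <= j -> mt_le (Phi i) (Phi j)) ->
  mp (Phi j) k = Some p -> subtree (UPhi Phi k) (mT (Phi j) k 0).
Proof.
move=> Phi_incr Phijk t /(_ 0) [j' [p' [Phij'k [_ T0t]]]].
have [le_jj' | /ltnW le_j'j] := leqP j j'.
  have [_ [_ [_ eqT]]] := Phi_incr _ _ le_jj' k p Phijk.
  by rewrite -(eqT 0 (leq0n _)).
have [_ [_ [_ eqT]]] := Phi_incr _ _ le_j'j k p' Phij'k.
by rewrite (eqT 0 (leq0n _)).
Qed.

Definition mt_graft (psi : multitree) (N : nat) (X : tree) : multitree :=
  MultiTree (fun k => if k == N then Some 0 else mp psi k)
            (fun k n => if k == N then X else mT psi k n).

Lemma MT_graft P psi N X :
  LTF P -> P X -> MT P psi -> (forall k, N <= k -> mp psi k = None) ->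
  MT P (mt_graft psi N X).
Proof.
move=> [P_LT _] PX [[_ psi_mt] psi_LC] psi_supp; split; [split|].
- exists N.+1 => k lt_N_k /=; rewrite gtn_eqF //; exact/psi_supp/ltnW.
- move=> k p /=; case: eqP => [_ [<-] | _]; last exact: psi_mt.
  by split=> [n _ | n le1n len0]; [exact: P_LT | have := leq_trans le1n len0].
- move=> k p /=; case: eqP => [_ [<-] n | _]; last exact: psi_LC.
  rewrite leqn0 => /eqP ->; split; first exact: P_LT.
  by case.
Qed.

Lemma mt_le_graft psi N X : mp psi N = None -> mt_le psi (mt_graft psi N X).
Proof.
move=> psiN k a psika; exists a; rewrite /= psika.
by case: eqP => [eq_kN | _]; [rewrite eq_kN psiN in psika | ].
Qed.

Definition has_root (P : treeset) (X : tree) (phi : multitree) : Prop :=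
  MT P phi /\ exists k p, mp phi k = Some p /\ mT phi k 0 = X.

Lemma dense_has_root P X : LTF P -> P X -> dense_MT P (has_root P X).
Proof.
move=> LTF_P PX; split=> [phi [] // | psi MT_psi].
have [[[N psi_supp] _] _] := MT_psi.
exists (mt_graft psi N X); split; last exact/mt_le_graft/psi_supp.
split; first exact: MT_graft.
by exists N, 0; rewrite /= eqxx.
Qed.

Theorem lemma7p3
  (P : treeset) (inM : (multitree -> Prop) -> Prop) (Phi : nat -> multitree) :
  LTF P ->
  model_ok P inM ->
  (forall j, MT P (Phi j)) ->
  (forall i j, i <= j -> mt_le (Phi i) (Phi j)) ->
  (forall D, inM D -> dense_MT P D -> exists j, D (Phi j)) ->
  (* 𝕌 is dense in 𝕌 ∪ ℙ *)
  (forall X, Uset Phi X \/ P X -> exists Y, Uset Phi Y /\ subtree Y X) /\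
  (* 𝕌 ×_{E0} 𝕌 is dense in (ℙ ∪ 𝕌) ×_{E0} (ℙ ∪ 𝕌) *)
  (forall X X', E0pair (fun Z => P Z \/ Uset Phi Z) X X' ->
     exists Y Y', E0pair (Uset Phi) Y Y' /\ subtree Y X /\ subtree Y' X').
Proof.
move=> LTF_P [_ inM_root] _ Phi_incr Phi_generic.
have U_dense X : Uset Phi X \/ P X -> exists Y, Uset Phi Y /\ subtree Y X.
  case=> [UX | PX]; first by exists X; split => // t.
  have [j [_ [k [p [Phijk <-]]]]] :=
    Phi_generic _ (inM_root X PX) (dense_has_root LTF_P PX).
  by exists (UPhi Phi k); split; [exact: Uset_UPhi | exact: UPhi_sub_root Phijk].
split=> // X _ [PUX [_ [s ->]]].
have [Y [UY sub_YX]] : exists Y, Uset Phi Y /\ subtree Y X.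
  by apply: U_dense; case: PUX; [right | left].
exists Y, (dotT s Y); split; last by split; [exact: sub_YX | exact: dotT_subtree].
by split; [exact: UY | split; [exact: Uset_dotT | exists s]].
Qed.
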